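(* Let $X$ be a nonempty compact metric space, $Y$ a compact metric space and $\mathcal Y$ an $(X)$-regularizing family for $Y$. Then every point $p\in Y$ is the limit of some sequence $(Z_n)$ of pairwise distinct members of $\mathcal Y$, i.e. for some (equivalently, every) choice of points $p_n\in Z_n$ we have $p_n\to p$.
   Context: An $(X)$-regularizing family for $Y$ is a countably infinite family $\mathcal Y$ of subsets of $Y$ such that: (a1) the members are pairwise disjoint subspaces homeomorphic to $X$; (a2) $\mathcal Y$ is null (for every $\varepsilon>0$ only finitely many members have diameter $\ge\varepsilon$); (a3) each member has dense complement in $Y$; (a4) $\bigcup\mathcal Y$ is dense in $Y$; (a5) any two points not in a common member of $\mathcal Y$ are separated by an open, closed, $\mathcal Y$-saturated subset of $Y$ (each member is contained in it or disjoint from it). *)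

From HB Require Import structures.
From mathcomp Require Import all_boot all_order all_algebra.
From mathcomp Require Import all_classical all_reals all_analysis.
Set Implicit Arguments. Unset Strict Implicit. Unset Printing Implicit Defensive.
Import Order.TTheory GRing.Theory Num.Theory.
Local Open Scope classical_set_scope.
Local Open Scope ring_scope.

Definition diam {R : realType} {Y : metricType R} (A : set Y) : R :=
  sup [set mdist x y | x in A & y in A].

Definition homeomorphic_to {X Y : topologicalType} (A : set Y) : Prop :=
  exists (f : X -> Y) (g : Y -> X),
    [/\ continuous f, f @` setT = A, {within A, continuous g},
        (forall x, g (f x) = x) & (forall y, A y -> f (g y) = y)].

Definition saturated {Y : Type} (F : set (set Y)) (U : set Y) : Prop :=
  forall Z, F Z -> Z `<=` U \/ Z `&` U = set0.

Definition regularizing_family {R : realType} (X : topologicalType)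
    (Y : metricType R) (F : set (set Y)) : Prop :=
  (F #= [set: nat])%card /\
  [/\
      ((forall Z, F Z -> @homeomorphic_to X Y Z) /\
       (forall Z1 Z2, F Z1 -> F Z2 -> Z1 <> Z2 -> Z1 `&` Z2 = set0)),
      (forall eps : R, 0 < eps -> finite_set [set Z | F Z /\ eps <= diam Z]),
      (forall Z, F Z -> dense (setC Z)),
      dense (\bigcup_(Z in F) Z) &
      (forall x y : Y, x <> y -> ~ (exists Z, [/\ F Z, Z x & Z y]) ->
        exists U : set Y, [/\ open U, closed U, saturated F U, U x & ~ U y])].

(** Near any point [p] one can always find a member of the family which is
    small, meets a small ball around [p], and differs from finitely many
    prescribed members: the finitely many members that are big or prescribed
    are closed (compact images of [X]) with dense complements, so a small
    open ball around [p] contains a nonempty open set avoiding all of them,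
    and that open set meets some member by density of the union.  Choosing
    such members recursively, with radii [1/(n+1)] and avoiding all earlier
    choices, yields pairwise distinct members converging to [p]. *)

From HB Require Import structures.
From mathcomp Require Import all_boot all_order all_algebra.
From mathcomp Require Import all_classical all_reals all_analysis.
From mathcomp Require Import lra.
Import Order.TTheory GRing.Theory Num.Theory.
Local Open Scope classical_set_scope.
Local Open Scope ring_scope.

Section metric_facts.
Context {R : realType} {Y : metricType R}.

Lemma continuous_mdist (y0 : Y) : continuous (fun x : Y => (mdist y0 x : R^o)).
Proof.
move=> x0; apply/cvgrPdist_lt => e e0; near=> x.
have : ball x0 e x by near: x; exact: nbhsx_ballx.
rewrite ballEmdist /= => x0x.
have := metric_triangle y0 x0 x; have := metric_triangle y0 x x0.
by rewrite (metric_sym x x0) ltr_distl => ? ?; apply/andP; split; lra.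
Unshelve. all: by end_near.
Qed.

Lemma compact_mdist_bounded :
  compact [set: Y] -> exists M, forall x y : Y, mdist x y <= M.
Proof.
move=> cY; have [[y0 _]|Y0] := pselect (exists y : Y, True); last first.
  by exists 0 => x; exfalso; apply: Y0; exists x.
have [M [_ HM]] := compact_bounded
  (continuous_compact (continuous_subspaceT (continuous_mdist y0)) cY).
have bound (x : Y) : mdist y0 x <= M + 1.
  by rewrite -[mdist _ _]ger0_norm ?mdist_ge0 //; apply: HM; [lra|exists x].
exists ((M + 1) * 2) => x y.
have := bound x; have := bound y; have := metric_triangle x y0 y.
by rewrite (metric_sym x y0); lra.
Qed.

Lemma mdist_le_diam {Z : set Y} {x y : Y} :
  compact [set: Y] -> Z x -> Z y -> mdist x y <= diam Z.
Proof.
move=> /compact_mdist_bounded [M HM] Zx Zy; apply: ub_le_sup.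
  by exists M => _ [a _ [b _ <-]].
by exists x => //; exists y.
Qed.

Lemma cvg_mdist_natinv (p : Y) (q : nat -> Y) :
  (forall n, mdist p (q n) < 2 * n.+1%:R^-1) -> q n @[n --> \oo] --> p.
Proof.
move=> pq; apply/cvg_ballP => eps eps0.
have eps2 : 0 < eps / 2 by rewrite divr_gt0.
apply: filterS (near_infty_natSinv_lt (PosNum eps2)) => n /= small.
rewrite ballEmdist /=; have := pq n.
by set i := _^-1 in small *; lra.
Qed.

End metric_facts.

Lemma homeomorphic_closed {X Y : topologicalType} (Z : set Y) :
  hausdorff_space Y -> compact [set: X] -> @homeomorphic_to X Y Z -> closed Z.
Proof.
move=> hY cX [f [_ [fc <- _ _ _]]].
apply: compact_closed => //.
exact: continuous_compact (continuous_subspaceT fc) cX.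
Qed.

Lemma open_avoid_closed_codense {Y : topologicalType} (s : seq (set Y)) (U : set Y) :
  open U -> U !=set0 -> (forall Z, Z \in s -> closed Z /\ dense (~` Z)) ->
  exists V : set Y, [/\ open V, V !=set0, V `<=` U &
    forall Z, Z \in s -> V `&` Z = set0].
Proof.
elim: s U => [|Z s IH] U oU U0 hs.
  by exists U; split => // Z; rewrite in_nil.
have [cZ dZ] := hs Z (mem_head _ _).
have oUZ : open (U `&` ~` Z) by apply: openI => //; exact: closed_openC.
have [|V [oV V0 VU VZ]] := IH _ oUZ (dZ U U0 oU).
  by move=> Z' Z's; apply: hs; rewrite in_cons Z's orbT.
exists V; split => //; first by move=> x /VU [].
move=> Z'; rewrite in_cons => /orP [/eqP ->|]; last exact: VZ.
by apply/seteqP; split => // x [/VU [_ nZx] Zx].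
Qed.

Lemma fresh_sequence {T : eqType} {P : nat -> T -> Prop} :
  (forall n (s : seq T), exists2 x, P n x & x \notin s) ->
  exists f : nat -> T, injective f /\ forall n, P n (f n).
Proof.
move=> fresh.
have fresh_pair (ns : nat * seq T) : exists x, P ns.1 x /\ x \notin ns.2.
  by have [x] := fresh ns.1 ns.2; exists x.
have [pick pickP] := choice fresh_pair.
pose L := fix L n := if n is m.+1 then pick (m, L m) :: L m else [::].
have earlier_in_L m n : (m < n)%N -> pick (m, L m) \in L n.
  elim: n => // n IH; rewrite ltnS leq_eqVlt => /orP [/eqP ->|mn] /=.
    by rewrite mem_head.
  by rewrite in_cons IH ?orbT.
exists (fun n => pick (n, L n)); split => [m n|n]; last by case: (pickP (n, L n)).
wlog mn : m n / (m < n)%N => [wlog_mn|fmn].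
  by move=> fmn; case: (ltngtP m n) => // mn; [|apply/esym]; apply: wlog_mn.
case: (pickP (n, L n)) => _ /negP; rewrite -fmn.
by have := earlier_in_L m n mn.
Qed.

Section regularizing_family_facts.
Context {R : realType} {Y : metricType R} (F : set (set Y)).
Hypothesis F_closed : forall Z, F Z -> closed Z.
Hypothesis F_codense : forall Z, F Z -> dense (~` Z).
Hypothesis F_null :
  forall eps : R, 0 < eps -> finite_set [set Z | F Z /\ eps <= diam Z].
Hypothesis F_cover_dense : dense (\bigcup_(Z in F) Z).

Lemma small_fresh_member_near (p : Y) (eps : R) (s : seq (set Y)) : 0 < eps ->
  exists2 Z, [/\ F Z, diam Z < eps & exists2 y, Z y & mdist p y < eps]
           & Z \notin s.
Proof.
move=> eps0.
pose G := [set Z | F Z /\ eps <= diam Z] `|` ([set` s] `&` F).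
have /finite_seqP [sG GE] : finite_set G.
  rewrite finite_setU; split; first exact: F_null.
  exact: sub_finite_set (@subIsetl _ _ _) (finite_seq s).
have [|V [oV V0 Vball VsG]] := open_avoid_closed_codense sG _
    (open_interior (ball p eps)) (ex_intro _ p (nbhsx_ballx p eps eps0)).
  move=> Z ZsG; have : G Z by rewrite GE.
  by case=> [[FZ _]|[_ FZ]]; split; by [apply: F_closed | apply: F_codense].
have [y [Vy [Z FZ Zy]]] := F_cover_dense V V0 oV.
have notGZ : ~ G Z.
  rewrite GE /= => /VsG /seteqP [/(_ y) VZ _].
  exact: VZ (conj Vy Zy).
have pyeps : mdist p y < eps.
  by have := interior_subset (Vball y Vy); rewrite ballEmdist.
exists Z; last by apply/negP => Zs; apply: notGZ; right.
split => //; last by exists y.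
by rewrite ltNge; apply/negP => big; apply: notGZ; left.
Qed.

End regularizing_family_facts.

Theorem fact2 (R : realType) (X Y : metricType R) (F : set (set Y)) :
  [set: X] !=set0 -> compact [set: X] -> compact [set: Y] ->
  regularizing_family X F ->
  forall p : Y, exists Zs : nat -> set Y,
    [/\ forall n, F (Zs n), injective Zs &
        forall q : nat -> Y, (forall n, Zs n (q n)) -> q n @[n --> \oo] --> p].
Proof.
move=> _ cX cY [_ [[hom _] null codense cover_dense _]] p.
have F_closed Z : F Z -> closed Z.
  by move=> /hom; apply: homeomorphic_closed cX; exact: metric_hausdorff.
pose e n : R := n.+1%:R^-1.
have e_gt0 n : 0 < e n by rewrite invr_gt0.
have [Zs [Zs_inj Zs_small]] := fresh_sequence (fun n s =>
  small_fresh_member_near F F_closed codense null cover_dense p _ s (e_gt0 n)).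
exists Zs; split => [n|//|q qZs]; first by case: (Zs_small n).
apply: cvg_mdist_natinv => n.
have [_ diam_small [y Zy py]] := Zs_small n.
have := mdist_le_diam cY Zy (qZs n); have := metric_triangle p y (q n).
rewrite -/(e n); move: (e n) (diam (Zs n)) diam_small py => r d; lra.
Qed.
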